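(* Let $i\ge0$, $l\ge1$, $j_1,\ldots,j_l\ge0$ and $k_1,\ldots,k_l$ be integers. Then $$b_{i,j_1+\cdots+j_l,k_1+\cdots+k_l}=\sum\binom{i}{i_1,\ldots,i_l}\prod_{r=1}^{l}b_{i_r,j_r,k_r},$$ where the sum is over all tuples of integers $i_1\ge0,\ldots,i_l\ge0$ with $i_1+\cdots+i_l=i$.
   Context: For integers $i\ge0$, $j\ge0$ and real $k$, $b_{i,j,k}=\sum_{r=0}^{j}\binom{j}{r}(-1)^{j-r}(r+k)^i$, with the convention $0^0=1$. $\binom{i}{i_1,\ldots,i_l}=\frac{i!}{i_1!\cdots i_l!}$ is the multinomial coefficient. *)

From HB Require Import structures.
From mathcomp Require Import all_boot all_order all_algebra.
Set Implicit Arguments. Unset Strict Implicit. Unset Printing Implicit Defensive.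
Import Order.TTheory GRing.Theory Num.Theory.
Local Open Scope ring_scope.

(* b_{i,j,k} = sum_{r=0}^{j} C(j,r) (-1)^(j-r) (r+k)^i, over the integers.
   The power x ^+ 0 = 1 implements the convention 0^0 = 1. *)
Definition bcoef (i j : nat) (k : int) : int :=
  \sum_(r < j.+1) ('C(j, r))%:Z * (-1) ^+ (j - r) * ((r%:Z + k) ^+ i).

Definition multinom (i : nat) (s : seq nat) : nat :=
  (i`! %/ \prod_(x <- s) x`!)%N.

From HB Require Import structures.
From mathcomp Require Import all_boot all_order all_algebra.
From mathcomp Require Import ring.
Set Implicit Arguments.
Unset Strict Implicit.
Unset Printing Implicit Defensive.
Import Order.TTheory GRing.Theory Num.Theory.
Local Open Scope ring_scope.

(* Pascal's rule gives b(i, j+1, k) = b(i, j, k+1) - b(i, j, k), and induction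
   on j with the binomial theorem then gives the binomial convolution
   b(n, J+j, K+k) = sum_a C(n, a) b(a, J, K) b(n-a, j, k).  Hence the truncated
   exponential generating polynomials E_(j,k) = sum_(a <= i) b(a, j, k) X^a / a!
   multiply like exponentials up to degree i: the product of the E_(j_r, k_r)
   agrees with E_(sum j, sum k) there.  Expanding the product and reading off
   the coefficient of X^i yields the multinomial formula. *)

Lemma bcoef0 n k : bcoef n 0 k = k ^+ n.
Proof. by rewrite /bcoef big_ord1 bin0 subnn expr0 !mul1r add0r. Qed.

Lemma bcoefS n m k : bcoef n m.+1 k = bcoef n m (k + 1) - bcoef n m k.
Proof.
pose u (c e r : nat) : int := c%:Z * (-1) ^+ e * (r.+1%:Z + k) ^+ n.
have shifted : bcoef n m (k + 1) = \sum_(r < m.+1) u 'C(m, r) (m - r)%N r.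
  by apply: eq_bigr => r _; rewrite /u intS; congr (_ * _ ^+ _); ring.
have unshifted :
    bcoef n m k = (-1) ^+ m * k ^+ n - \sum_(r < m) u 'C(m, r.+1) (m - r)%N r.
  rewrite /bcoef big_ord_recl bin0 subn0 mul1r add0r -sumrN; congr (_ + _).
  apply: eq_bigr => r _; rewrite /u lift0 -(subnSK (ltn_ord r)) exprS.
  by rewrite mulN1r mulrN mulNr opprK.
have top_vanishes : \sum_(r < m.+1) u 'C(m, r.+1) (m - r)%N r =
                    \sum_(r < m) u 'C(m, r.+1) (m - r)%N r.
  by rewrite big_ord_recr /= bin_small // /u mul0r mul0r addr0.
rewrite shifted unshifted /bcoef big_ord_recl bin0 subn0 mul1r add0r.
under eq_bigr => r _ do rewrite lift0 subSS binS PoszD !mulrDl.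
rewrite big_split /= -top_vanishes exprS mulN1r.
rewrite /u; ring.
Qed.

Lemma bcoefD n J j K k : bcoef n (J + j) (K + k) =
  \sum_(a < n.+1) 'C(n, a)%:Z * bcoef a J K * bcoef (n - a) j k.
Proof.
elim: j k => [|j IHj] k.
  rewrite addn0 /bcoef.
  under eq_bigr => s _ do rewrite addrA [_ + k]addrC exprDn mulr_sumr.
  rewrite exchange_big /=; apply: eq_bigr => a _.
  rewrite big_ord1 bin0 subnn expr0 mulr1 add0r mulr_sumr mulr_suml.
  by apply: eq_bigr => s _; rewrite -mulr_natl; ring.
rewrite addnS !bcoefS -addrA !IHj -sumrB; apply: eq_bigr => a _.
by rewrite bcoefS mulrBr.
Qed.

Lemma coef_prod_poly (R : comNzRingType) (l n : nat) (c : 'I_l -> nat -> R) :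
  (\prod_(r < l) \poly_(a < n.+1) c r a)`_n =
  \sum_(t : {ffun 'I_l -> 'I_n.+1} | (\sum_(r < l) (t r : nat))%N == n)
     \prod_(r < l) c r (t r).
Proof.
have polyE r : \poly_(a < n.+1) c r a = \sum_(a < n.+1) (c r a)%:P * 'X^a.
  by rewrite poly_def; apply: eq_bigr => a _; rewrite mul_polyC.
under eq_bigr => r _ do rewrite polyE.
rewrite bigA_distr_bigA coef_sum [RHS]big_mkcond /=; apply: eq_bigr => t _.
rewrite big_split /= -rmorph_prod prodrXr coefCM coefXn eq_sym.
by case: eqP; rewrite ?mulr1 ?mulr0.
Qed.

Lemma prod_fact_dvdn_fact_sum l (t : 'I_l -> nat) :
  (\prod_(r < l) (t r)`! %| (\sum_(r < l) t r)`!)%N.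
Proof.
elim: l t => [|l IHl] t; first by rewrite !big_ord0.
rewrite !big_ord_recr /=; set s := (\sum_(r < l) _)%N.
apply: (@dvdn_trans (s`! * (t ord_max)`!)); first exact: dvdn_mul.
rewrite -(bin_fact (leq_addl s (t ord_max))) addnK.
by rewrite [X in (_ %| _ * X)%N]mulnC dvdn_mull.
Qed.

Lemma multinom_prod_fact l (t : 'I_l -> nat) :
  (multinom (\sum_(r < l) t r) [seq t r | r <- enum 'I_l] *
   \prod_(r < l) (t r)`!)%N = (\sum_(r < l) t r)`!.
Proof.
by rewrite /multinom big_map big_enum divnK //; apply: prod_fact_dvdn_fact_sum.
Qed.

Section TruncatedEGF.

Variable F : numFieldType.

Lemma natr_fact_neq0 n : n`!%:R != 0 :> F.
Proof. by rewrite pnatr_eq0 -lt0n fact_gt0. Qed.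

Definition egf (n : nat) (f : nat -> F) : {poly F} :=
  \poly_(a < n.+1) (f a / a`!%:R).

Lemma coef_egf n f a : (a <= n)%N -> (egf n f)`_a = f a / a`!%:R.
Proof. by move=> le_an; rewrite coef_poly ltnS le_an. Qed.

Lemma coefM_binomial_convolution (p q : {poly F}) (f g : nat -> F) n :
    (forall a, (a <= n)%N -> p`_a = f a / a`!%:R) ->
    (forall a, (a <= n)%N -> q`_a = g a / a`!%:R) ->
  (p * q)`_n = (\sum_(a < n.+1) 'C(n, a)%:R * f a * g (n - a)%N) / n`!%:R.
Proof.
move=> pE qE; rewrite coefM mulr_suml; apply: eq_bigr => a _.
have le_an : (a <= n)%N by rewrite -ltnS.
rewrite pE // qE ?leq_subr // -(bin_fact le_an) !natrM.
have nz_bin : 'C(n, a)%:R != 0 :> F by rewrite pnatr_eq0 -lt0n bin_gt0.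
by field; rewrite nz_bin !natr_fact_neq0.
Qed.

Lemma coef_prod_egf_bcoef i l (j : 'I_l -> nat) (k : 'I_l -> int) a :
    (a <= i)%N ->
  (\prod_(r < l) egf i (fun b => (bcoef b (j r) (k r))%:~R))`_a =
  (bcoef a (\sum_(r < l) j r) (\sum_(r < l) k r))%:~R / a`!%:R.
Proof.
elim: l j k a => [|l IHl] j k a le_ai.
  rewrite !big_ord0 bcoef0 coef1.
  by case: a {le_ai} => [|a]; rewrite ?expr0n ?mul0r ?divr1.
rewrite !big_ord_recr /= bcoefD rmorph_sum /=.
under [in RHS]eq_bigr => b _ do rewrite !intrM.
have le_i b : (b <= a)%N -> (b <= i)%N := fun le_ba => leq_trans le_ba le_ai.
by rewrite (coefM_binomial_convolution (fun b le_ba => IHl _ _ b (le_i b le_ba))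
                                       (fun b le_ba => coef_egf _ (le_i b le_ba))).
Qed.

End TruncatedEGF.

Theorem mainTheorem18 (i l : nat) (hl : (1 <= l)%N)
  (j : 'I_l -> nat) (k : 'I_l -> int) :
  bcoef i (\sum_(r < l) j r)%N (\sum_(r < l) k r) =
  \sum_(t : {ffun 'I_l -> 'I_i.+1} | (\sum_(r < l) (t r : nat))%N == i)
     (multinom i [seq (t r : nat) | r <- enum 'I_l])%:Z *
     \prod_(r < l) bcoef (t r) (j r) (k r).
Proof.
apply: (@intr_inj rat).
have := coef_prod_egf_bcoef rat j k (leqnn i); rewrite coef_prod_poly => egfE.
rewrite -[LHS](divfK (natr_fact_neq0 rat i)) -egfE mulr_suml rmorph_sum.
apply: eq_bigr => t /eqP sum_t; rewrite rmorphM rmorph_prod prodf_div /=.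
have := multinom_prod_fact (fun r => t r).
rewrite sum_t => /(congr1 (fun x => x%:R : rat)).
rewrite natrM natr_prod => <-.
have nz_prod : \prod_(r < l) (t r)`!%:R != 0 :> rat.
  by apply/prodf_neq0 => r _; apply: natr_fact_neq0.
by field.
Qed.
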